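(* Let $Z=\{z_n\}_{n\in\mathbb{N}}$ be an almost periodic divisor in a strip $S$, let $S^0$ be a substrip with $\overline{S^0}\subset S$, let $\varepsilon>0$, and let $\tau_1,\tau_2\in E_{\varepsilon,S^0}$. Then there is a bijection $\sigma:\mathbb{N}\to\mathbb{N}$ such that for every $j$ with $z_j\in S^0$ and $\operatorname{dist}(z_j,\partial S^0)>\varepsilon$, $$|z_j+i(\tau_1-\tau_2)-z_{\sigma(j)}|<2\varepsilon,\qquad |z_j-i(\tau_1-\tau_2)-z_{\sigma^{-1}(j)}|<2\varepsilon.$$
   Context: A (vertical) strip is a set $\{z\in\mathbb{C}: a<\operatorname{Re} z<b\}$ with $-\infty\le a<b\le\infty$; a substrip of $S$ is a strip of this form contained in $S$. A divisor in $S$ is a sequence $\{z_j\}\subset S$ without limit points in $S$ (points may repeat finitely often, encoding multiplicity); $|Z|$ denotes its set of points. A set $E\subset\mathbb{R}$ is relatively dense if there is $L<\infty$ with $E\cap[\alpha,\alpha+L]\ne\emptyset$ for every $\alpha\in\mathbb{R}$. For $\varepsilon>0$ and a substrip $S^0$ with $\overline{S^0}\subset S$, $E_{\varepsilon,S^0}$ denotes the set of all $\tau\in\mathbb{R}$ for which there exists a bijection $\sigma=\sigma_\tau:\mathbb{N}\to\mathbb{N}$ such that for every $j$, ($z_j\in S^0$ or $z_{\sigma(j)}\in S^0$) implies $|z_j+i\tau-z_{\sigma(j)}|<\varepsilon$. The divisor $Z$ is almost periodic if $E_{\varepsilon,S^0}$ is relatively dense for every such $\varepsilon$ and $S^0$.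 *)

From Stdlib Require Import Reals.
From Coquelicot Require Import Coquelicot.
Open Scope R_scope.

Definition strip (a b : Rbar) (z : C) : Prop :=
  Rbar_lt a (Finite (Re z)) /\ Rbar_lt (Finite (Re z)) b.

Definition closed_strip (a b : Rbar) (z : C) : Prop :=
  Rbar_le a (Finite (Re z)) /\ Rbar_le (Finite (Re z)) b.

(* Boundary of the strip {a < Re z < b}: the lines Re z = a, Re z = b
   (only those which are finite). *)
Definition strip_boundary (a b : Rbar) (z : C) : Prop :=
  Finite (Re z) = a \/ Finite (Re z) = b.

(* dist(z, A) > r, with dist the infimum of distances (= +oo if A empty). *)
Definition dist_gt (A : C -> Prop) (z : C) (r : R) : Prop :=
  exists d, r < d /\ forall w, A w -> d <= Cmod (Cminus z w).

Definition bijN (s : nat -> nat) : Prop :=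
  exists t : nat -> nat, (forall n, t (s n) = n) /\ (forall n, s (t n) = n).

(* A divisor in S: a sequence of points of S without limit points in S. *)
Definition divisor_in (S : C -> Prop) (z : nat -> C) : Prop :=
  (forall j, S (z j)) /\
  (forall w, S w -> exists r, 0 < r /\ exists N, forall j, (N <= j)%nat -> r <= Cmod (Cminus (z j) w)).

Definition shiftI (z : C) (tau : R) : C := Cplus z (Cmult Ci (RtoC tau)).

Definition E_set (z : nat -> C) (eps : R) (a0 b0 : Rbar) (tau : R) : Prop :=
  exists s : nat -> nat, bijN s /\
    forall j, (strip a0 b0 (z j) \/ strip a0 b0 (z (s j))) ->
      Cmod (Cminus (shiftI (z j) tau) (z (s j))) < eps.

Definition rel_dense (E : R -> Prop) : Prop :=
  exists L : R, forall alpha, exists t, E t /\ alpha <= t <= alpha + L.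

Definition good_substrip (a b a0 b0 : Rbar) : Prop :=
  Rbar_lt a0 b0 /\ (forall z, closed_strip a0 b0 z -> strip a b z).

Definition almost_periodic_divisor (a b : Rbar) (z : nat -> C) : Prop :=
  divisor_in (strip a b) z /\
  forall eps a0 b0, 0 < eps -> good_substrip a b a0 b0 ->
    rel_dense (E_set z eps a0 b0).

(* If [sigma1] moves every point near [S0] by about [i tau1] and [sigma2] by about
   [i tau2], then [sigma2^-1 o sigma1] moves [z_j] by about [i (tau1 - tau2)]:
   [z_(sigma1 j)] lies within [eps] of [z_j + i tau1], hence horizontally within
   [eps] of [z_j]; when [z_j] is farther than [eps] from the boundary of [S0] this
   keeps [z_(sigma1 j)] inside [S0], so the defining property of [sigma2] applies to
   the index [sigma2^-1 (sigma1 j)], and the triangle inequality gives [2 eps].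
   The inverse statement is the same argument with [tau1] and [tau2] exchanged. *)
From Stdlib Require Import Reals Lra.
From Coquelicot Require Import Coquelicot.
Open Scope R_scope.

Definition shift_matching (z : nat -> C) (eps : R) (a0 b0 : Rbar) (tau : R)
    (s : nat -> nat) : Prop :=
  forall j, (strip a0 b0 (z j) \/ strip a0 b0 (z (s j))) ->
    Cmod (Cminus (shiftI (z j) tau) (z (s j))) < eps.

Lemma Re_shiftI_sub (u w : C) (tau : R) :
  Re (Cminus (shiftI u tau) w) = Re u - Re w.
Proof.
  destruct u as [p q], w as [x y].
  unfold shiftI, Cminus, Cplus, Copp, Cmult, Ci, RtoC; simpl; ring.
Qed.

Lemma shiftI_sub_Re_lt (u w : C) (tau e : R) :
  Cmod (Cminus (shiftI u tau) w) < e -> Rabs (Re u - Re w) < e.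
Proof.
  intros H; rewrite <- (Re_shiftI_sub u w tau).
  exact (Rle_lt_trans _ _ _ (re_le_Cmod _) H).
Qed.

Lemma shiftI_sub_split (x y m : C) (tau1 tau2 : R) :
  Cminus (shiftI x (tau1 - tau2)) y =
  Cminus (Cminus (shiftI x tau1) m) (Cminus (shiftI y tau2) m).
Proof.
  destruct x as [p q], y as [r s], m as [u v].
  unfold shiftI, Cminus, Cplus, Copp, Cmult, Ci, RtoC; simpl.
  apply injective_projections; simpl; ring.
Qed.

Lemma Cmod_sub_lt_double (u v : C) (e : R) :
  Cmod u < e -> Cmod v < e -> Cmod (Cminus u v) < 2 * e.
Proof.
  intros Hu Hv; unfold Cminus.
  apply (Rle_lt_trans _ _ _ (Cmod_triangle _ _)); rewrite Cmod_opp; lra.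
Qed.

Lemma Cmod_sub_same_Im (p x q : R) : Cmod (Cminus (p, q) (x, q)) = Rabs (p - x).
Proof.
  replace (Cminus (p, q) (x, q)) with (RtoC (p - x)); [apply Cmod_R|].
  unfold Cminus, Cplus, Copp, RtoC; simpl.
  apply injective_projections; simpl; ring.
Qed.

Lemma strip_of_Re_near (a0 b0 : Rbar) (u w : C) (e : R) :
  strip a0 b0 u -> dist_gt (strip_boundary a0 b0) u e ->
  Rabs (Re u - Re w) < e -> strip a0 b0 w.
Proof.
  destruct u as [p q]; intros [Ha Hb] [d [Hed Hd]] Hw; simpl in *.
  apply Rabs_def2 in Hw as [Hw1 Hw2].
  split.
  - destruct a0 as [x| |]; simpl in *; try tauto.
    (* the boundary point on the horizontal line through [u] *)
    pose proof (Hd (x, q) (or_introl eq_refl)) as Hx.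
    rewrite Cmod_sub_same_Im, Rabs_pos_eq in Hx; lra.
  - destruct b0 as [x| |]; simpl in *; try tauto.
    pose proof (Hd (x, q) (or_intror eq_refl)) as Hx.
    rewrite Cmod_sub_same_Im, Rabs_left in Hx; lra.
Qed.

Lemma shift_matching_compose (z : nat -> C) (eps : R) (a0 b0 : Rbar)
    (tau1 tau2 : R) (s1 s2 t2 : nat -> nat) :
  (forall n, s2 (t2 n) = n) ->
  shift_matching z eps a0 b0 tau1 s1 ->
  shift_matching z eps a0 b0 tau2 s2 ->
  forall j, strip a0 b0 (z j) -> dist_gt (strip_boundary a0 b0) (z j) eps ->
    Cmod (Cminus (shiftI (z j) (tau1 - tau2)) (z (t2 (s1 j)))) < 2 * eps.
Proof.
  intros Hs2t2 H1 H2 j Hj Hdist.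
  pose proof (H1 j (or_introl Hj)) as E1.
  assert (Hin : strip a0 b0 (z (s2 (t2 (s1 j))))).
  { rewrite Hs2t2.
    exact (strip_of_Re_near _ _ _ _ _ Hj Hdist (shiftI_sub_Re_lt _ _ _ _ E1)). }
  pose proof (H2 _ (or_intror Hin)) as E2; rewrite Hs2t2 in E2.
  rewrite (shiftI_sub_split _ _ (z (s1 j))).
  exact (Cmod_sub_lt_double _ _ _ E1 E2).
Qed.

Theorem lemma1 (a b : Rbar) (z : nat -> C) (a0 b0 : Rbar) (eps tau1 tau2 : R) :
  Rbar_lt a b ->
  almost_periodic_divisor a b z ->
  good_substrip a b a0 b0 ->
  0 < eps ->
  E_set z eps a0 b0 tau1 ->
  E_set z eps a0 b0 tau2 ->
  exists s t : nat -> nat,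
    (forall n, t (s n) = n) /\ (forall n, s (t n) = n) /\
    forall j, strip a0 b0 (z j) -> dist_gt (strip_boundary a0 b0) (z j) eps ->
      Cmod (Cminus (shiftI (z j) (tau1 - tau2)) (z (s j))) < 2 * eps /\
      Cmod (Cminus (shiftI (z j) (- (tau1 - tau2))) (z (t j))) < 2 * eps.
Proof.
  intros _ _ _ _ [s1 [[t1 [Ht1s1 Hs1t1]] H1]] [s2 [[t2 [Ht2s2 Hs2t2]] H2]].
  exists (fun n => t2 (s1 n)), (fun n => t1 (s2 n)).
  split; [intro n; rewrite Hs2t2; apply Ht1s1|].
  split; [intro n; rewrite Hs1t1; apply Ht2s2|].
  intros j Hj Hdist; split.
  - exact (shift_matching_compose z eps a0 b0 tau1 tau2 s1 s2 t2 Hs2t2 H1 H2 j Hj Hdist).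
  - rewrite Ropp_minus_distr.
    exact (shift_matching_compose z eps a0 b0 tau2 tau1 s2 s1 t1 Hs1t1 H2 H1 j Hj Hdist).
Qed.
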